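(* (Hyperdense coding with local continuous reversibility but without tomographic locality.) Let $N\ge2$, $n=2^N-1$, $m\ge1$. Let $\Omega_A=\Omega_B=\Omega^{(n)}_m$ with local effect set $\mathcal E_{\mathrm{loc}}$, local transformations $\mathcal T=\{T^{(R)}_\mu\}$, entangled states $\Phi_\mu$, joint state space $\Omega_{AB}$ and effects $F_y$ as in the context. Then: (a) $\Lambda:=\{T\Phi_{\mathbf 0}T'^{\mathrm t}:T,T'\in\mathcal T\}=\{\Phi_\mu\}_{\mu\in\{0,1\}^N}$, and $\Omega_A\otimes_{\min}\Omega_B\subseteq\Omega_{AB}\subseteq\Omega_A\otimes_{\max}\Omega_B$; (b) every $T\in\mathcal T$ maps $\Omega_A$ into itself and $\Omega_{AB}$ into itself (acting on either side), and any two pure local states are connected by elements of $\mathcal T$ depending continuously on an $\mathrm{SO}(m)$ parameter; (c) $(e\otimes f)\cdot\Phi_\mu$ does not depend on $\mu$ for any $e,f\in\mathcal E_{\mathrm{loc}}$, although the $\Phi_\mu$ are pairwise distinct (tomographic locality fails); (d) each $F_y$ lies in $\mathcal E_{AB}$, $\sum_yF_y=u\otimes u$, and $F_y\cdot(T^{(R)}_x\Phi_{\mathbf 0})=F_y\cdot\Phi_x=\delta_{y,x}$; hence the dense coding protocol (shared $\Phi_{\mathbf 0}$, encoding by $T^{(R)}_x$, decoding by $\{F_y\}$, uniform $x\in\{0,1\}^N$) achieves $I(X:Y)=N$, while the classical capacity of each local system is $1$ bit.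
   Context: $\Omega^{(n)}_m=\{(1,\mathbf 0,r)^{\mathrm t}:\mathbf 0\in\mathbb R^n,\ r\in\mathbb R^m,\ \lVert r\rVert\le1\}\subset\mathbb R^{1+n+m}$, unit effect $u=(1,\mathbf 0)^{\mathrm t}$ (zero in $\mathbb R^{n+m}$), local effect set $\mathcal E_{\mathrm{loc}}=$ convex hull of the zero vector, $u$, and $\tfrac12(1,\mathbf 0,r)^{\mathrm t}$ for unit $r\in\mathbb R^m$. Classical capacity is defined as the supremum of $I(X:Y)$ over finite message distributions, states and measurements (families in $\mathcal E_{\mathrm{loc}}$ summing to $u$) with $p(y|x)=e_y\cdot\omega_x$. Bipartite states are real $(1+n+m)\times(1+n+m)$ matrices, identified with tensors via $v\otimes w=vw^{\mathrm t}$, inner product $X\cdot Y=\mathrm{Tr}(X^{\mathrm t}Y)$; $\Omega_A\otimes_{\min}\Omega_B$ is the convex hull of product states; $\Omega_A\otimes_{\max}\Omega_B=\{\phi:(u\otimes u)\cdot\phi=1,(e\otimes f)\cdot\phi\ge0\ \forall e,f\in\mathcal E_{\mathrm{loc}}\}$. Coordinates of $\mathbb R^{2^N}$ are indexed by $\nu\in\{0,1\}^N$ with $\nu=\mathbf 0$ first; $(d_\mu)_\nu=(-1)^{\mu\cdot\nu}$ ($\mu\cdot\nu$ = inner product mod 2); $\phi_\mu=T_\mu=\mathrm{diag}(d_\mu)$ ($2^N\times2^N$), $E_\mu=2^{-N}\phi_\mu$. Define $T^{(R)}_\mu=\begin{pmatrix}T_\mu&0\\0&R\end{pmatrix}$ for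 $R\in\mathrm{SO}(m)$ and $\mu\in\{0,1\}^N$, $\mathcal T=\{T^{(R)}_\mu\}$; $\Phi_\mu=\begin{pmatrix}\phi_\mu&0\\0&0\end{pmatrix}$ (zero $m\times m$ block); $\Omega_{AB}=$ convex hull of $\Omega_A\otimes_{\min}\Omega_B\cup\Lambda$; $\mathcal E_{AB}=\{E:0\le E\cdot\phi\le1\ \forall\phi\in\Omega_{AB}\}$; $F_y=2^{-N}\Phi_y$. Local transformations act on $A$ as $\phi\mapsto T\phi$ and on $B$ as $\phi\mapsto\phi T^{\mathrm t}$. *)

From Stdlib Require Import Reals Lra Lia List Arith.
Open Scope R_scope.

Fixpoint sumR (k : nat) (f : nat -> R) : R :=
  match k with O => 0 | S k' => sumR k' f + f k' end.

(** Vectors / matrices are functions on indices; all concrete objects below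
    are zero outside the relevant index range, so Leibniz equality is used. *)
Definition vec := nat -> R.
Definition mat := nat -> nat -> R.

Definition vadd (v w : vec) : vec := fun i => v i + w i.
Definition vscal (a : R) (v : vec) : vec := fun i => a * v i.
Definition vzero : vec := fun _ => 0.
Definition madd (A B : mat) : mat := fun i j => A i j + B i j.
Definition mscal (a : R) (A : mat) : mat := fun i j => a * A i j.
Definition mzero : mat := fun _ _ => 0.

Definition dotv (d : nat) (v w : vec) : R := sumR d (fun i => v i * w i).
Definition dotm (d : nat) (X Y : mat) : R :=
  sumR d (fun i => sumR d (fun j => X i j * Y i j)).
Definition mmul (d : nat) (A B : mat) : mat :=
  fun i j => sumR d (fun k => A i k * B k j).
Definition mvec (d : nat) (A : mat) (v : vec) : vec :=
  fun i => sumR d (fun k => A i k * v k).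
Definition trans (A : mat) : mat := fun i j => A j i.
Definition tens (v w : vec) : mat := fun i j => v i * w j.

Definition conv {X : Type} (z : X) (add : X -> X -> X) (sc : R -> X -> X)
  (P : X -> Prop) (x : X) : Prop :=
  exists l : list (R * X),
    Forall (fun p => 0 <= fst p /\ P (snd p)) l /\
    fold_right (fun p s => fst p + s) 0 l = 1 /\
    x = fold_right (fun p s => add (sc (fst p) (snd p)) s) z l.

Definition convv := @conv vec vzero vadd vscal.
Definition convm := @conv mat mzero madd mscal.

Definition minor (j : nat) (M : mat) : mat :=
  fun i k => M (S i) (if (k <? j)%nat then k else S k).
Fixpoint det (n : nat) (M : mat) : R :=
  match n with
  | O => 1
  | S n' => sumR (S n') (fun j => (-1) ^ j * M O j * det n' (minor j M))
  end.

Definition kdelta (i j : nat) : R := if (i =? j)%nat then 1 else 0.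

(** R in SO(m) (only the m x m block of the function matters). *)
Definition SO (m : nat) (Rm : mat) : Prop :=
  (forall i j, (i < m)%nat -> (j < m)%nat ->
     sumR m (fun k => Rm k i * Rm k j) = kdelta i j) /\
  det m Rm = 1.

Definition idmat (m : nat) : mat :=
  fun i j => if ((i <? m) && (i =? j))%bool then 1 else 0.

Section Model.
(* Dimensions: n = 2^N - 1, total dimension 1+n+m = 2^N + m. *)

Definition dimN (N : nat) : nat := 2 ^ N.
Definition Dim (N m : nat) : nat := (2 ^ N + m)%nat.

(** mu . nu mod 2, with mu, nu in {0,1}^N encoded in binary as nats < 2^N
    (so nu = 0 is the first coordinate). *)
Fixpoint bitdot (N mu nu : nat) : nat :=
  match N with
  | O => O
  | S k => (bitdot k mu nu + (if (Nat.testbit mu k && Nat.testbit nu k)%bool then 1 else 0))%nat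
  end.

Definition dsign (N mu nu : nat) : R := (-1) ^ (bitdot N mu nu).

(** The state (1, 0, r) in R^{1+n+m}. *)
Definition stateOf (N m : nat) (r : vec) : vec :=
  fun i => if (i =? 0)%nat then 1
           else if ((2 ^ N <=? i) && (i <? 2 ^ N + m))%bool then r (i - 2 ^ N)%nat
           else 0.

Definition normsq (m : nat) (r : vec) : R := sumR m (fun i => r i * r i).

Definition Omega (N m : nat) (w : vec) : Prop :=
  exists r : vec, normsq m r <= 1 /\ w = stateOf N m r.

Definition uvec : vec := fun i => if (i =? 0)%nat then 1 else 0.

Definition Eloc (N m : nat) (e : vec) : Prop :=
  convv (fun v => v = vzero \/ v = uvec \/
           exists r, normsq m r = 1 /\ v = vscal (/2) (stateOf N m r)) e.

Definition pure (N m : nat) (w : vec) : Prop :=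
  Omega N m w /\
  forall w1 w2 p, 0 < p < 1 -> Omega N m w1 -> Omega N m w2 ->
    w = vadd (vscal p w1) (vscal (1 - p) w2) -> w1 = w /\ w2 = w.

Definition Phi (N mu : nat) : mat :=
  fun i j => if ((i <? 2 ^ N) && (i =? j))%bool then dsign N mu i else 0.

Definition Tblock (N m mu : nat) (Rm : mat) : mat :=
  fun i j =>
    if ((i <? 2 ^ N) && (j <? 2 ^ N))%bool then
      (if (i =? j)%nat then dsign N mu i else 0)
    else if ((2 ^ N <=? i) && (i <? 2 ^ N + m) && (2 ^ N <=? j) && (j <? 2 ^ N + m))%bool
    then Rm (i - 2 ^ N)%nat (j - 2 ^ N)%nat
    else 0.

Definition inT (N m : nat) (T : mat) : Prop :=
  exists mu Rm, (mu < 2 ^ N)%nat /\ SO m Rm /\ T = Tblock N m mu Rm.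

Definition Lambda (N m : nat) (phi : mat) : Prop :=
  exists T T', inT N m T /\ inT N m T' /\
    phi = mmul (Dim N m) (mmul (Dim N m) T (Phi N 0)) (trans T').

Definition OmegaMin (N m : nat) : mat -> Prop :=
  convm (fun phi => exists w w', Omega N m w /\ Omega N m w' /\ phi = tens w w').

Definition OmegaMax (N m : nat) (phi : mat) : Prop :=
  dotm (Dim N m) (tens uvec uvec) phi = 1 /\
  forall e f, Eloc N m e -> Eloc N m f -> 0 <= dotm (Dim N m) (tens e f) phi.

Definition OmegaAB (N m : nat) : mat -> Prop :=
  convm (fun phi => OmegaMin N m phi \/ Lambda N m phi).

Definition EAB (N m : nat) (E : mat) : Prop :=
  forall phi, OmegaAB N m phi -> 0 <= dotm (Dim N m) E phi <= 1.

Definition Feff (N y : nat) : mat := mscal (/ 2 ^ N) (Phi N y).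

Definition log2 (x : R) : R := ln x / ln 2.
Definition mutual_info (nx ny : nat) (px : nat -> R) (pyx : nat -> nat -> R) : R :=
  let py := fun y => sumR nx (fun x => px x * pyx x y) in
  sumR nx (fun x => sumR ny (fun y =>
    let pxy := px x * pyx x y in
    if Req_EM_T pxy 0 then 0 else pxy * log2 (pyx x y / py y))).

Definition cap_achievable (N m : nat) (I : R) : Prop :=
  exists (nx ny : nat) (px : nat -> R) (om e : nat -> vec),
    (forall x, (x < nx)%nat -> 0 <= px x) /\ sumR nx px = 1 /\
    (forall x, (x < nx)%nat -> Omega N m (om x)) /\
    (forall y, (y < ny)%nat -> Eloc N m (e y)) /\
    (fun i => sumR ny (fun y => e y i)) = uvec /\
    I = mutual_info nx ny px (fun x y => dotv (Dim N m) (e y) (om x)).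

Definition capacity_is (N m : nat) (c : R) : Prop := is_lub (cap_achievable N m) c.

End Model.

(* The sign vectors d_mu are the characters of (Z/2)^N, hence orthogonal:
   sum_i d_y(i) d_mu(i) = 2^N [y = mu].  So F_y . Phi_mu = delta_{y,mu}: the 2^N states
   T_mu Phi_0 = Phi_mu are perfectly distinguishable and carry N bits, and sum_y F_y = u (x) u
   since only the trivial column of the character table has nonzero sum.  Local effects
   vanish on the coordinates 1 .. 2^N - 1 where the Phi_mu differ, so product effects see
   only the (0,0) entry.  On one system an outcome has likelihood p(y|x) <= 2 e_y(0) with
   sum_y e_y(0) = 1, which bounds the capacity by log2 2 = 1 bit; two antipodal pure states
   attain it.  Pure states are joined by plane rotations, whose determinant stays 1 along
   the path by the intermediate value theorem. *)

From Stdlib Require Import Reals Lra Lia List Arith FunctionalExtensionality.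
From mathcomp Require ssreflect ssrfun ssrbool eqtype ssrnat seq fintype bigop ssralg matrix.
From mathcomp Require Rstruct.
Open Scope R_scope.

(** * Finite sums *)

Ltac case_nat_tests := repeat match goal with
 | |- context [ (?a =? ?b)%nat ] => destruct (Nat.eqb_spec a b)
 | |- context [ (?a <? ?b)%nat ] => destruct (Nat.ltb_spec a b)
 | |- context [ (?a <=? ?b)%nat ] => destruct (Nat.leb_spec a b)
 end; simpl.

Lemma sumR_ext n f g : (forall i, (i < n)%nat -> f i = g i) -> sumR n f = sumR n g.
Proof. induction n; simpl; intros H; auto. rewrite IHn, H by (intros; try apply H; lia). auto. Qed.

Lemma sumR_add n f g : sumR n (fun i => f i + g i) = sumR n f + sumR n g.
Proof. induction n; simpl; [lra|]. rewrite IHn. lra. Qed.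

Lemma sumR_sub n f g : sumR n (fun i => f i - g i) = sumR n f - sumR n g.
Proof. induction n; simpl; [lra|]. rewrite IHn. lra. Qed.

Lemma sumR_scal_l n c f : sumR n (fun i => c * f i) = c * sumR n f.
Proof. induction n; simpl; [lra|]. rewrite IHn. lra. Qed.

Lemma sumR_scal_r n c f : sumR n (fun i => f i * c) = sumR n f * c.
Proof. induction n; simpl; [lra|]. rewrite IHn. lra. Qed.

Lemma sumR_const n c : sumR n (fun _ => c) = INR n * c.
Proof. induction n; simpl sumR; [simpl; lra|]. rewrite IHn, S_INR. lra. Qed.

Lemma sumR_eq0 n f : (forall i, (i < n)%nat -> f i = 0) -> sumR n f = 0.
Proof. intros H. rewrite (sumR_ext n f (fun _ => 0)) by auto. rewrite sumR_const. lra. Qed.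

Lemma sumR_split a b f : sumR (a + b) f = sumR a f + sumR b (fun k => f (a + k)%nat).
Proof. induction b; simpl. rewrite Nat.add_0_r; lra. rewrite Nat.add_succ_r. simpl. rewrite IHb. lra. Qed.

Lemma sumR_kronecker n j g :
  sumR n (fun k => if (k =? j)%nat then g k else 0) = if (j <? n)%nat then g j else 0.
Proof. induction n; simpl; auto. rewrite IHn. case_nat_tests; subst; try lia; lra. Qed.

Lemma sumR_kronecker' n j g :
  sumR n (fun k => if (j =? k)%nat then g k else 0) = if (j <? n)%nat then g j else 0.
Proof. rewrite <- sumR_kronecker. apply sumR_ext. intros. case_nat_tests; auto; lia. Qed.

Lemma sumR_swap n d (f : nat -> nat -> R) :
  sumR n (fun y => sumR d (fun i => f y i)) = sumR d (fun i => sumR n (fun y => f y i)).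
Proof. induction n; simpl. rewrite sumR_eq0; auto. rewrite IHn, <- sumR_add. auto. Qed.

Lemma sumR_mul n f g : sumR n f * sumR n g = sumR n (fun j => sumR n (fun l => f j * g l)).
Proof. rewrite <- sumR_scal_r. apply sumR_ext. intros. rewrite <- sumR_scal_l. auto. Qed.

Lemma sumR_head n f : (1 <= n)%nat -> (forall i, (1 <= i < n)%nat -> f i = 0) -> sumR n f = f O.
Proof.
  intros Hn H. replace n with (1 + (n - 1))%nat by lia.
  rewrite sumR_split, (sumR_eq0 (n - 1)) by (intros; apply H; lia). simpl. lra.
Qed.

Lemma sumR_ge0 n f : (forall i, (i < n)%nat -> 0 <= f i) -> 0 <= sumR n f.
Proof.
  induction n; simpl; intros H; [lra|].
  assert (0 <= f n) by (apply H; lia). assert (0 <= sumR n f) by (apply IHn; intros; apply H; lia). lra.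
Qed.

Lemma sumR_le n f g : (forall i, (i < n)%nat -> f i <= g i) -> sumR n f <= sumR n g.
Proof.
  intros H. assert (0 <= sumR n (fun i => g i - f i)) by (apply sumR_ge0; intros i Hi; specialize (H i Hi); lra).
  rewrite sumR_sub in *. lra.
Qed.

Lemma sumR_term_le n f j : (j < n)%nat -> (forall i, (i < n)%nat -> 0 <= f i) -> f j <= sumR n f.
Proof.
  intros Hj H. apply Rle_trans with (sumR n (fun k => if (k =? j)%nat then f k else 0)).
  - rewrite sumR_kronecker. case_nat_tests; lia || lra.
  - apply sumR_le. intros. case_nat_tests; [lra|]. apply H; auto.
Qed.

Lemma sumR_sq_eq0 m f : sumR m (fun k => f k * f k) = 0 -> forall k, (k < m)%nat -> f k = 0.
Proof.
  intros H k Hk.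
  assert (f k * f k <= sumR m (fun k => f k * f k))
    by (apply (sumR_term_le m (fun k => f k * f k)); auto; intros; apply Rle_0_sqr).
  nra.
Qed.

(** * Characters of (Z/2)^N *)

Lemma pow2_pos N : (0 < 2 ^ N)%nat.
Proof. apply Nat.neq_0_lt_0, Nat.pow_nonzero. lia. Qed.

Lemma INR_pow2 N : INR (2 ^ N) = 2 ^ N.
Proof. rewrite pow_INR. simpl. replace (1 + 1) with 2 by ring. auto. Qed.

Lemma pow2_ge1 N : 1 <= 2 ^ N.
Proof. rewrite <- INR_pow2. apply (le_INR 1). apply pow2_pos. Qed.

Lemma testbit_lt_pow2 N i k : (i < 2 ^ N)%nat -> (N <= k)%nat -> Nat.testbit i k = false.
Proof.
  intros H Hk. rewrite <- (Nat.mod_small i (2 ^ N)) by auto.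
  apply Nat.mod_pow2_bits_high. lia.
Qed.

Lemma testbit_add_pow2_low N i k :
  (i < 2 ^ N)%nat -> (k < N)%nat -> Nat.testbit (i + 2 ^ N) k = Nat.testbit i k.
Proof.
  intros H Hk. rewrite <- (Nat.mod_pow2_bits_low (i + 2 ^ N) N k) by auto.
  replace (i + 2 ^ N)%nat with (i + 1 * 2 ^ N)%nat by lia.
  rewrite Nat.Div0.mod_add, Nat.mod_small by auto. auto.
Qed.

Lemma testbit_add_pow2_top N i : (i < 2 ^ N)%nat -> Nat.testbit (i + 2 ^ N) N = true.
Proof.
  intros H. pose proof (Nat.div_pow2_bits (i + 2 ^ N) N 0) as E. simpl in E. rewrite <- E.
  replace (i + 2 ^ N)%nat with (i + 1 * 2 ^ N)%nat by lia.
  rewrite Nat.div_add, Nat.div_small by (auto || (apply Nat.pow_nonzero; lia)). reflexivity.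
Qed.

Lemma lxor_lt_pow2 N a b : (a < 2 ^ N)%nat -> (b < 2 ^ N)%nat -> (Nat.lxor a b < 2 ^ N)%nat.
Proof.
  intros Ha Hb. destruct (Nat.eq_dec (Nat.lxor a b) 0) as [E|E]; [rewrite E; apply pow2_pos|].
  destruct (Nat.lt_ge_cases (Nat.lxor a b) (2 ^ N)) as [|Hge]; auto.
  pose proof (Nat.bit_log2 _ E) as Htop. rewrite Nat.lxor_spec in Htop.
  assert (N <= Nat.log2 (Nat.lxor a b))%nat by (apply Nat.log2_le_pow2; lia).
  rewrite !(testbit_lt_pow2 N) in Htop by auto. discriminate.
Qed.

Lemma bitdot_congr N a a' i i' :
  (forall k, (k < N)%nat -> Nat.testbit a k = Nat.testbit a' k) ->
  (forall k, (k < N)%nat -> Nat.testbit i k = Nat.testbit i' k) ->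
  bitdot N a i = bitdot N a' i'.
Proof.
  induction N; simpl; intros Ha Hi; auto.
  rewrite IHN, Ha, Hi by (intros; auto). auto.
Qed.

Lemma bitdot_sym N a b : bitdot N a b = bitdot N b a.
Proof. induction N; simpl; auto. rewrite IHN, Bool.andb_comm. auto. Qed.

Lemma bitdot_0r N a : bitdot N a 0 = 0%nat.
Proof. induction N; simpl; auto. rewrite IHN, Nat.bits_0, Bool.andb_false_r. auto. Qed.

Lemma dsign_sym N a b : dsign N a b = dsign N b a.
Proof. unfold dsign. rewrite bitdot_sym. auto. Qed.

Lemma dsign_0r N a : dsign N a 0 = 1.
Proof. unfold dsign. rewrite bitdot_0r. simpl. lra. Qed.

Lemma dsign_0l N a : dsign N 0 a = 1.
Proof. rewrite dsign_sym. apply dsign_0r. Qed.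

Lemma dsign_S N a i : dsign (S N) a i =
  dsign N a i * (if (Nat.testbit a N && Nat.testbit i N)%bool then -1 else 1).
Proof.
  unfold dsign. simpl bitdot. rewrite pow_add.
  destruct (Nat.testbit a N && Nat.testbit i N)%bool; simpl; lra.
Qed.

Lemma dsign_mul N a b i : dsign N a i * dsign N b i = dsign N (Nat.lxor a b) i.
Proof.
  induction N; [unfold dsign; simpl; lra|].
  rewrite !dsign_S, Nat.lxor_spec, <- IHN.
  destruct (Nat.testbit a N), (Nat.testbit b N), (Nat.testbit i N); simpl; lra.
Qed.

Lemma dsign_sq N a i : dsign N a i * dsign N a i = 1.
Proof. rewrite dsign_mul, Nat.lxor_nilpotent. apply dsign_0l. Qed.

(* The upper half of [0, 2^(N+1)) differs from the lower half only in bit N, which flips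
   the sign iff bit N of [a] is set. *)
Lemma sum_dsign N a :
  sumR (2 ^ N) (dsign N a) =
  if forallb (fun k => negb (Nat.testbit a k)) (seq 0 N) then INR (2 ^ N) else 0.
Proof.
  induction N; [unfold dsign; simpl; lra|].
  replace (2 ^ S N)%nat with (2 ^ N + 2 ^ N)%nat by (simpl; lia).
  rewrite sumR_split.
  rewrite (sumR_ext (2 ^ N) (dsign (S N) a) (dsign N a)).
  2:{ intros i Hi. rewrite dsign_S, (testbit_lt_pow2 N i N), Bool.andb_false_r by auto. lra. }
  rewrite (sumR_ext (2 ^ N) (fun k => dsign (S N) a (2 ^ N + k))
             (fun i => dsign N a i * (if Nat.testbit a N then -1 else 1))).
  2:{ intros i Hi. rewrite dsign_S, Nat.add_comm, testbit_add_pow2_top, Bool.andb_true_r by auto.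
      f_equal. unfold dsign. f_equal. apply bitdot_congr; auto. intros; apply testbit_add_pow2_low; auto. }
  rewrite sumR_scal_r, IHN, seq_S, forallb_app. simpl.
  destruct (Nat.testbit a N), (forallb _ _); simpl; rewrite ?plus_INR; lra.
Qed.

Lemma forallb_low_bits N a :
  forallb (fun k => negb (Nat.testbit a k)) (seq 0 N) = true <->
  forall k, (k < N)%nat -> Nat.testbit a k = false.
Proof.
  rewrite forallb_forall. split; intros H k Hk.
  - assert (In k (seq 0 N)) as Hin by (apply in_seq; lia).
    specialize (H k Hin). destruct (Nat.testbit a k); auto.
  - apply in_seq in Hk. rewrite H by lia. auto.
Qed.

Lemma dsign_orthogonal N x y : (x < 2 ^ N)%nat -> (y < 2 ^ N)%nat ->
  sumR (2 ^ N) (fun i => dsign N y i * dsign N x i) = if (y =? x)%nat then INR (2 ^ N) else 0.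
Proof.
  intros Hx Hy. rewrite (sumR_ext _ _ (dsign N (Nat.lxor y x))) by (intros; apply dsign_mul).
  rewrite sum_dsign.
  destruct (forallb _ _) eqn:E; destruct (Nat.eqb_spec y x) as [->|Hne]; auto.
  - exfalso. apply Hne, Nat.bits_inj. intros k. rewrite forallb_low_bits in E.
    destruct (Nat.lt_ge_cases k N) as [Hk|Hk].
    + specialize (E k Hk). rewrite Nat.lxor_spec in E.
      destruct (Nat.testbit y k), (Nat.testbit x k); simpl in *; congruence.
    + rewrite !(testbit_lt_pow2 N) by auto. auto.
  - rewrite Nat.lxor_nilpotent in E.
    assert (forallb (fun k => negb (Nat.testbit 0 k)) (seq 0 N) = true)
      by (apply forallb_low_bits; intros; apply Nat.bits_0).
    congruence.
Qed.

Lemma sum_dsign_column N i : (i < 2 ^ N)%nat ->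
  sumR (2 ^ N) (fun y => dsign N y i) = if (i =? 0)%nat then INR (2 ^ N) else 0.
Proof.
  intros Hi. rewrite <- (dsign_orthogonal N 0 i) by (auto; apply pow2_pos).
  apply sumR_ext. intros. rewrite dsign_0l, dsign_sym. ring.
Qed.

(** * Convex hulls and bilinear forms *)

Section ConvexHull.
Variables (X : Type) (z : X) (add : X -> X -> X) (sc : R -> X -> X).

Section LinearFunctional.
Variable g : X -> R.
Hypotheses (g_zero : g z = 0) (g_add : forall x y, g (add x y) = g x + g y)
  (g_scal : forall a x, g (sc a x) = a * g x).

Lemma conv_ge (P : X -> Prop) lo : (forall x, P x -> lo <= g x) ->
  forall x, conv z add sc P x -> lo <= g x.
Proof.
  intros H x [l [Hl [Hsum ->]]]. rewrite <- (Rmult_1_r lo), <- Hsum. clear Hsum.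
  induction l as [|[a x] l IH]; simpl; [rewrite g_zero; lra|].
  inversion Hl as [|? ? [Ha Hx] Hl']; subst; simpl in Ha, Hx. rewrite g_add, g_scal.
  specialize (IH Hl'). specialize (H x Hx). nra.
Qed.
End LinearFunctional.

Lemma conv_le (g : X -> R) (P : X -> Prop) hi :
  g z = 0 -> (forall x y, g (add x y) = g x + g y) -> (forall a x, g (sc a x) = a * g x) ->
  (forall x, P x -> g x <= hi) -> forall x, conv z add sc P x -> g x <= hi.
Proof.
  intros g_zero g_add g_scal H x Hx.
  enough (- hi <= - g x) by lra.
  apply (conv_ge (fun x => - g x)) with P; auto.
  - rewrite g_zero; lra.
  - intros; rewrite g_add; lra.
  - intros; rewrite g_scal; lra.
  - intros y Hy. specialize (H y Hy). lra.
Qed.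

Lemma conv_const (g : X -> R) (P : X -> Prop) c :
  g z = 0 -> (forall x y, g (add x y) = g x + g y) -> (forall a x, g (sc a x) = a * g x) ->
  (forall x, P x -> g x = c) -> forall x, conv z add sc P x -> g x = c.
Proof.
  intros g_zero g_add g_scal H x Hx. apply Rle_antisym.
  - apply (conv_le g P); auto. intros; rewrite H; auto; lra.
  - apply (conv_ge g g_zero g_add g_scal P); auto. intros; rewrite H; auto; lra.
Qed.

Lemma conv_single (P : X -> Prop) x : add (sc 1 x) z = x -> P x -> conv z add sc P x.
Proof.
  intros Hx HP. exists ((1, x) :: nil). simpl. repeat split; auto; try lra.
  constructor; simpl; auto. split; auto; lra.
Qed.
End ConvexHull.

Lemma conv_map {X Y : Type} zx addx scx zy addy scy (L : X -> Y) (P : X -> Prop) (Q : Y -> Prop) :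
  L zx = zy -> (forall x y, L (addx x y) = addy (L x) (L y)) -> (forall a x, L (scx a x) = scy a (L x)) ->
  (forall x, P x -> Q (L x)) ->
  forall x, conv zx addx scx P x -> conv zy addy scy Q (L x).
Proof.
  intros L_zero L_add L_scal HPQ x [l [Hl [Hsum ->]]].
  exists (map (fun p => (fst p, L (snd p))) l). split; [|split].
  - rewrite Forall_map. eapply Forall_impl; [|exact Hl]. simpl. intros p [? ?]; auto.
  - rewrite <- Hsum. clear. induction l; simpl; auto. rewrite IHl; auto.
  - clear Hl Hsum. induction l; simpl; auto. rewrite L_add, L_scal, IHl. auto.
Qed.

Lemma convv_single P v : P v -> convv P v.
Proof.
  apply conv_single. extensionality i. unfold vadd, vscal, vzero. lra.
Qed.

Lemma convm_single P A : P A -> convm P A.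
Proof.
  apply conv_single. extensionality i. extensionality j. unfold madd, mscal, mzero. lra.
Qed.

Lemma dotv_vadd_l d v w x : dotv d (vadd v w) x = dotv d v x + dotv d w x.
Proof. unfold dotv, vadd. rewrite <- sumR_add. apply sumR_ext; intros; lra. Qed.

Lemma dotv_vscal_l d a v x : dotv d (vscal a v) x = a * dotv d v x.
Proof. unfold dotv, vscal. rewrite <- sumR_scal_l. apply sumR_ext; intros; lra. Qed.

Lemma dotv_vzero_l d x : dotv d vzero x = 0.
Proof. unfold dotv, vzero. apply sumR_eq0; intros; lra. Qed.

Lemma dotm_madd d A B X : dotm d X (madd A B) = dotm d X A + dotm d X B.
Proof.
  unfold dotm, madd. rewrite <- sumR_add. apply sumR_ext; intros.
  rewrite <- sumR_add. apply sumR_ext; intros; lra.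
Qed.

Lemma dotm_mscal d a A X : dotm d X (mscal a A) = a * dotm d X A.
Proof.
  unfold dotm, mscal. rewrite <- sumR_scal_l. apply sumR_ext; intros.
  rewrite <- sumR_scal_l. apply sumR_ext; intros; lra.
Qed.

Lemma dotm_mzero d X : dotm d X mzero = 0.
Proof. unfold dotm, mzero. apply sumR_eq0; intros. apply sumR_eq0; intros; lra. Qed.

Lemma dotm_mscal_l d a A X : dotm d (mscal a A) X = a * dotm d A X.
Proof.
  unfold dotm, mscal. rewrite <- sumR_scal_l. apply sumR_ext; intros.
  rewrite <- sumR_scal_l. apply sumR_ext; intros; lra.
Qed.

Lemma dotm_tens d e f w w' : dotm d (tens e f) (tens w w') = dotv d e w * dotv d f w'.
Proof.
  unfold dotm, tens, dotv. rewrite <- sumR_scal_r. apply sumR_ext; intros.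
  rewrite <- sumR_scal_l. apply sumR_ext; intros; lra.
Qed.

Lemma mmul_tens_l d T w w' : mmul d T (tens w w') = tens (mvec d T w) w'.
Proof.
  extensionality i. extensionality j. unfold mmul, tens, mvec.
  rewrite <- sumR_scal_r. apply sumR_ext; intros; lra.
Qed.

Lemma mmul_tens_r d T w w' : mmul d (tens w w') (trans T) = tens w (mvec d T w').
Proof.
  extensionality i. extensionality j. unfold mmul, tens, mvec, trans.
  rewrite <- sumR_scal_l. apply sumR_ext; intros; lra.
Qed.

Lemma mmul_madd d T A B : mmul d T (madd A B) = madd (mmul d T A) (mmul d T B).
Proof.
  extensionality i. extensionality j. unfold mmul, madd.
  rewrite <- sumR_add. apply sumR_ext; intros; lra.
Qed.

Lemma mmul_mscal d T a A : mmul d T (mscal a A) = mscal a (mmul d T A).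
Proof.
  extensionality i. extensionality j. unfold mmul, mscal.
  rewrite <- sumR_scal_l. apply sumR_ext; intros; lra.
Qed.

Lemma mmul_mzero d T : mmul d T mzero = mzero.
Proof. extensionality i. extensionality j. unfold mmul, mzero. apply sumR_eq0; intros; lra. Qed.

Lemma mmul_madd_r d T A B : mmul d (madd A B) T = madd (mmul d A T) (mmul d B T).
Proof.
  extensionality i. extensionality j. unfold mmul, madd.
  rewrite <- sumR_add. apply sumR_ext; intros; lra.
Qed.

Lemma mmul_mscal_r d T a A : mmul d (mscal a A) T = mscal a (mmul d A T).
Proof.
  extensionality i. extensionality j. unfold mmul, mscal.
  rewrite <- sumR_scal_l. apply sumR_ext; intros; lra.
Qed.

Lemma mmul_mzero_r d T : mmul d mzero T = mzero.
Proof. extensionality i. extensionality j. unfold mmul, mzero. apply sumR_eq0; intros; lra. Qed.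

(** * The local system *)

Lemma stateOf_0 N m r : stateOf N m r O = 1.
Proof. reflexivity. Qed.

Lemma stateOf_mid N m r i : (1 <= i < 2 ^ N)%nat -> stateOf N m r i = 0.
Proof. intros. unfold stateOf. case_nat_tests; auto; lia. Qed.

Lemma stateOf_hi N m r k : (k < m)%nat -> stateOf N m r (2 ^ N + k)%nat = r k.
Proof. intros. unfold stateOf. pose proof (pow2_pos N). case_nat_tests; try lia. f_equal. lia. Qed.

Lemma stateOf_ext N m r r' : (forall k, (k < m)%nat -> r k = r' k) -> stateOf N m r = stateOf N m r'.
Proof. intros H. extensionality i. unfold stateOf. case_nat_tests; auto. apply H. lia. Qed.

Lemma stateOf_inj N m r r' : stateOf N m r = stateOf N m r' -> forall k, (k < m)%nat -> r k = r' k.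
Proof. intros H k Hk. rewrite <- (stateOf_hi N m r k Hk), <- (stateOf_hi N m r' k Hk), H. auto. Qed.

Lemma stateOf_convex N m p a b :
  vadd (vscal p (stateOf N m a)) (vscal (1 - p) (stateOf N m b)) =
  stateOf N m (fun k => p * a k + (1 - p) * b k).
Proof. extensionality i. unfold vadd, vscal, stateOf. case_nat_tests; ring. Qed.

Lemma dotv_stateOf N m v r :
  dotv (Dim N m) v (stateOf N m r) = v O + sumR m (fun k => v (2 ^ N + k)%nat * r k).
Proof.
  unfold dotv, Dim. rewrite sumR_split, sumR_head.
  - rewrite stateOf_0. f_equal; [lra|]. apply sumR_ext; intros. rewrite stateOf_hi; auto.
  - apply pow2_pos.
  - intros. rewrite stateOf_mid by lia. lra.
Qed.

Lemma dot_bound_normsq m a b :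
  - (normsq m a + normsq m b) <= 2 * sumR m (fun k => a k * b k) <= normsq m a + normsq m b.
Proof.
  unfold normsq.
  assert (0 <= sumR m (fun k => (a k + b k) * (a k + b k))) by (apply sumR_ge0; intros; apply Rle_0_sqr).
  assert (0 <= sumR m (fun k => (a k - b k) * (a k - b k))) by (apply sumR_ge0; intros; apply Rle_0_sqr).
  rewrite (sumR_ext _ _ (fun k => (a k * a k + b k * b k) + 2 * (a k * b k))) in H by (intros; ring).
  rewrite (sumR_ext _ _ (fun k => (a k * a k + b k * b k) - 2 * (a k * b k))) in H0 by (intros; ring).
  rewrite sumR_add, sumR_scal_l in H. rewrite sumR_sub, sumR_scal_l in H0. rewrite sumR_add in *.
  lra.
Qed.

Lemma normsq_ge0 m r : 0 <= normsq m r.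
Proof. apply sumR_ge0. intros. apply Rle_0_sqr. Qed.

Lemma uvec_dotv_Omega N m w : Omega N m w -> dotv (Dim N m) uvec w = 1.
Proof.
  intros [r [_ ->]]. rewrite dotv_stateOf, sumR_eq0; [unfold uvec; simpl; lra|].
  intros. unfold uvec. pose proof (pow2_pos N). case_nat_tests; try lia; lra.
Qed.

Lemma Eloc_uvec N m : Eloc N m uvec.
Proof. apply convv_single. auto. Qed.

Lemma Eloc_0_ge0 N m e : Eloc N m e -> 0 <= e O.
Proof.
  apply (conv_ge _ vzero vadd vscal (fun v => v O)); auto.
  intros x [->|[->|[r [_ ->]]]]; unfold vzero, uvec, vscal, stateOf; simpl; lra.
Qed.

Lemma Eloc_mid N m e i : Eloc N m e -> (1 <= i < 2 ^ N)%nat -> e i = 0.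
Proof.
  intros He Hi. revert e He. apply (conv_const _ vzero vadd vscal (fun v => v i)); auto.
  intros x [->|[->|[r [_ ->]]]]; unfold vzero, uvec, vscal; auto.
  - case_nat_tests; auto; lia.
  - rewrite stateOf_mid; auto. lra.
Qed.

(* The extreme effect [(u + r')/2] gives [(1 + r'.r)/2] on the state [(1, 0, r)], and
   [|r'.r| <= 1]. *)
Lemma Eloc_dotv_bounds N m e w : Eloc N m e -> Omega N m w ->
  0 <= dotv (Dim N m) e w <= 2 * e O.
Proof.
  intros He Hw. pose proof (uvec_dotv_Omega N m w Hw) as Hu.
  destruct Hw as [r [Hr ->]].
  assert (Hgen : forall r', normsq m r' = 1 ->
    2 * dotv (Dim N m) (vscal (/2) (stateOf N m r')) (stateOf N m r) =
    1 + sumR m (fun k => r' k * r k)).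
  { intros r' _. rewrite dotv_vscal_l, dotv_stateOf, stateOf_0.
    rewrite (sumR_ext _ _ (fun k => r' k * r k)) by (intros; rewrite stateOf_hi; auto). field. }
  split.
  - revert e He. apply (conv_ge _ vzero vadd vscal (fun v => dotv (Dim N m) v (stateOf N m r))).
    + apply dotv_vzero_l.
    + intros; apply dotv_vadd_l.
    + intros; apply dotv_vscal_l.
    + intros x [->|[->|[r' [H1 ->]]]]; [rewrite dotv_vzero_l; lra|lra|].
      specialize (Hgen r' H1). pose proof (dot_bound_normsq m r' r). lra.
  - enough (0 <= 2 * e O - dotv (Dim N m) e (stateOf N m r)) by lra.
    revert e He. apply (conv_ge _ vzero vadd vscal (fun v => 2 * v O - dotv (Dim N m) v (stateOf N m r))).
    + rewrite dotv_vzero_l. unfold vzero; lra.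
    + intros; rewrite dotv_vadd_l; unfold vadd; lra.
    + intros; rewrite dotv_vscal_l; unfold vscal; lra.
    + intros x [->|[->|[r' [H1 ->]]]]; [rewrite dotv_vzero_l; unfold vzero; lra|rewrite Hu; unfold uvec; simpl; lra|].
      specialize (Hgen r' H1). pose proof (dot_bound_normsq m r' r).
      change (vscal (/2) (stateOf N m r') O) with (/2 * stateOf N m r' O). rewrite stateOf_0. lra.
Qed.

Definition orthogonal (m : nat) (Rm : mat) : Prop :=
  forall i j, (i < m)%nat -> (j < m)%nat -> sumR m (fun k => Rm k i * Rm k j) = kdelta i j.

Lemma normsq_mvec_orthogonal m Rm r : orthogonal m Rm -> normsq m (mvec m Rm r) = normsq m r.
Proof.
  intros HO. unfold normsq, mvec.
  rewrite (sumR_ext _ _ (fun k => sumR m (fun j => sumR m (fun l => (Rm k j * r j) * (Rm k l * r l)))))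
    by (intros; apply sumR_mul).
  rewrite sumR_swap. apply sumR_ext. intros j Hj. rewrite sumR_swap.
  rewrite (sumR_ext _ _ (fun l => if (j =? l)%nat then r j * r l else 0)).
  - rewrite sumR_kronecker'. case_nat_tests; auto; lia.
  - intros l Hl. transitivity (r j * r l * kdelta j l).
    + rewrite <- HO by auto. rewrite <- sumR_scal_l. apply sumR_ext; intros; ring.
    + unfold kdelta. case_nat_tests; ring.
Qed.

Lemma mvec_Tblock_stateOf N m mu Rm r :
  mvec (Dim N m) (Tblock N m mu Rm) (stateOf N m r) = stateOf N m (mvec m Rm r).
Proof.
  extensionality i. unfold mvec at 1, Dim. rewrite sumR_split.
  pose proof (pow2_pos N).
  destruct (Nat.lt_ge_cases i (2 ^ N)).
  - rewrite (sumR_eq0 m) by (intros; unfold Tblock; case_nat_tests; try lia; lra).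
    rewrite (sumR_ext _ _ (fun k => if (k =? i)%nat then (if (i =? 0)%nat then 1 else 0) else 0)).
    + rewrite sumR_kronecker. unfold stateOf. case_nat_tests; try lia; lra.
    + intros k Hk. unfold Tblock. case_nat_tests; subst; try lia; try lra.
      * rewrite dsign_0r, stateOf_0. lra.
      * rewrite stateOf_mid by lia. lra.
  - rewrite (sumR_eq0 (2 ^ N)) by (intros; unfold Tblock; case_nat_tests; try lia; lra).
    destruct (Nat.lt_ge_cases i (2 ^ N + m)).
    + replace i with (2 ^ N + (i - 2 ^ N))%nat by lia. rewrite stateOf_hi by lia.
      unfold mvec. rewrite Rplus_0_l. apply sumR_ext. intros k Hk.
      unfold Tblock. rewrite stateOf_hi by lia.
      replace (2 ^ N + (i - 2 ^ N) - 2 ^ N)%nat with (i - 2 ^ N)%nat by lia.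
      replace (2 ^ N + k - 2 ^ N)%nat with k by lia.
      case_nat_tests; lia || lra.
    + rewrite sumR_eq0 by (intros; unfold Tblock; case_nat_tests; try lia; lra).
      unfold stateOf. case_nat_tests; try lia; lra.
Qed.

(** * Orthogonal matrices and rotations *)

(* The Laplace expansion [det] agrees with MathComp's [\det], whose multiplicativity
   gives [det^2 = 1] for orthogonal matrices. *)
Module MathCompDet.
Import ssreflect ssrfun ssrbool eqtype ssrnat seq fintype bigop ssralg matrix Rstruct.
Import GRing.Theory.
Local Open Scope ring_scope.

Definition mxof (n : nat) (M : mat) : 'M[R]_n := \matrix_(i < n, j < n) M i j.

Lemma sumR_big n f : sumR n f = \sum_(i < n) f i.
Proof. elim: n => [|n IH] /=; first by rewrite big_ord0. by rewrite big_ord_recr /= IH. Qed.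

Lemma kdelta_ord n (i j : 'I_n) : kdelta i j = (i == j)%:R.
Proof.
rewrite /kdelta; case: (Nat.eqb_spec i j) => [/val_inj -> | Hij]; first by rewrite eqxx.
by case: eqP => // Hij'; case: Hij; rewrite Hij'.
Qed.

Lemma det_mxof n M : det n M = \det (mxof n M).
Proof.
elim: n M => [|n IH] M; first by rewrite det_mx00.
change (det n.+1 M) with (sumR n.+1 (fun j => (-1)^j * M O j * det n (minor j M)))%R.
rewrite (expand_det_row (mxof _ M) ord0) sumR_big.
apply: eq_bigr => j _; rewrite IH /cofactor mxE.
have -> : mxof n (minor j M) = row' ord0 (col' j (mxof n.+1 M)).
  apply/matrixP => i k; rewrite !mxE /minor /=; congr (M _ _).
  rewrite /bump; case: (Nat.ltb_spec k j) => H.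
  - by have -> : (j <= k)%N = false by apply/negbTE; rewrite -ltnNge; apply/ltP.
  - by have -> : (j <= k)%N = true by apply/leP.
rewrite mulrA; congr (_ * _).
by rewrite RpowE add0n mulrC -RoppE.
Qed.

Lemma orthogonal_det_sq m Rm : orthogonal m Rm -> (det m Rm * det m Rm)%R = 1%R.
Proof.
move=> HO; rewrite det_mxof.
have HT : (mxof m Rm)^T *m mxof m Rm = 1%:M.
  apply/matrixP => i j; rewrite !mxE -kdelta_ord -HO; [|by apply/ltP|by apply/ltP].
  by rewrite sumR_big; apply: eq_bigr => k _; rewrite !mxE.
by have := congr1 determinant HT; rewrite det_mulmx det_tr det1 -RmultE.
Qed.

Lemma det_idmat m : det m (idmat m) = 1%R.
Proof.
rewrite det_mxof.
have -> : mxof m (idmat m) = 1%:M.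
  apply/matrixP => i j; rewrite !mxE -kdelta_ord /idmat /kdelta.
  by have -> : Nat.ltb i m = true by apply Nat.ltb_lt; apply/ltP.
by rewrite det1.
Qed.
End MathCompDet.

Lemma sumR_idmat_l m i f : (i < m)%nat -> sumR m (fun k => idmat m k i * f k) = f i.
Proof.
  intros Hi. rewrite (sumR_ext _ _ (fun k => if (k =? i)%nat then f k else 0)).
  - rewrite sumR_kronecker. case_nat_tests; lia || lra.
  - intros; unfold idmat; case_nat_tests; subst; lia || lra.
Qed.

Lemma sumR_idmat_r m i f : (i < m)%nat -> sumR m (fun k => f k * idmat m k i) = f i.
Proof. intros Hi. rewrite <- (sumR_idmat_l m i f Hi). apply sumR_ext; intros; lra. Qed.

Lemma SO_idmat m : SO m (idmat m).
Proof.
  split; [|apply MathCompDet.det_idmat].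
  intros i j Hi Hj. rewrite sumR_idmat_l by auto. unfold idmat, kdelta. case_nat_tests; lia || lra.
Qed.

Lemma continuity_sumR n (f : R -> nat -> R) : (forall j, continuity (fun t => f t j)) ->
  continuity (fun t => sumR n (f t)).
Proof.
  intros H. induction n; simpl.
  - apply continuity_const. intros x y; auto.
  - change (continuity (plus_fct (fun t => sumR n (f t)) (fun t => f t n))).
    apply continuity_plus; auto.
Qed.

Lemma continuity_det n (M : R -> mat) : (forall i j, continuity (fun t => M t i j)) ->
  continuity (fun t => det n (M t)).
Proof.
  revert M. induction n; intros M H.
  - apply continuity_const. intros x y; auto.
  - change (continuity (fun t => sumR (S n) (fun j => (-1) ^ j * M t O j * det n (minor j (M t))))).
    apply continuity_sumR. intros j.
    change (continuity (mult_fct (mult_fct (fun _ => (-1) ^ j) (fun t => M t O j))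
                                 (fun t => det n (minor j (M t))))).
    repeat apply continuity_mult; auto.
    + apply continuity_const. intros x y; auto.
    + apply (IHn (fun t => minor j (M t))). intros i k. apply H.
Qed.

(* [det] is continuous and takes only the values [1] and [-1] along the path, so by the
   intermediate value theorem it cannot leave [1]. *)
Lemma orthogonal_path_det m (M : R -> mat) :
  (forall t, orthogonal m (M t)) -> (forall i j, continuity (fun t => M t i j)) ->
  det m (M 0) = 1 -> forall t, 0 <= t -> det m (M t) = 1.
Proof.
  intros HO Hc H0 t Ht.
  assert (Hsq : forall s, det m (M s) * det m (M s) = 1)
    by (intros; apply MathCompDet.orthogonal_det_sq, HO).
  destruct (Req_dec (det m (M t)) 1) as [|Hne]; auto. exfalso.
  assert (Hm1 : det m (M t) = -1) by (specialize (Hsq t); nra).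
  destruct (Req_dec t 0) as [->|Ht0]; [lra|].
  destruct (IVT (fun s => - det m (M s)) 0 t) as [z [_ Hz]]; simpl; try lra.
  - change (continuity (opp_fct (fun s => det m (M s)))).
    apply continuity_opp, continuity_det, Hc.
  - specialize (Hsq z). nra.
Qed.

Lemma sumR_quadratic m (D1 D2 u v : vec) A B C E :
  sumR m (fun k => (D1 k + A * u k + B * v k) * (D2 k + C * u k + E * v k)) =
  sumR m (fun k => D1 k * D2 k) + C * sumR m (fun k => D1 k * u k) + E * sumR m (fun k => D1 k * v k)
  + A * sumR m (fun k => u k * D2 k) + B * sumR m (fun k => v k * D2 k)
  + A * C * sumR m (fun k => u k * u k) + (A * E + B * C) * sumR m (fun k => u k * v k)
  + B * E * sumR m (fun k => v k * v k).
Proof. rewrite <- !sumR_scal_l, <- !sumR_add. apply sumR_ext; intros; ring. Qed.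

(* The rotation by [theta] in the plane spanned by the orthonormal pair [u, v], identity on
   its orthogonal complement. *)
Definition plane_rotation (m : nat) (u v : vec) (theta : R) : mat :=
  fun i j => idmat m i j +
    ((cos theta - 1) * (u i * u j + v i * v j) + sin theta * (v i * u j - u i * v j)).

Section PlaneRotation.
Variables (m : nat) (u v : vec).
Hypotheses (Hu : normsq m u = 1) (Hv : normsq m v = 1) (Huv : sumR m (fun k => u k * v k) = 0).

Lemma plane_rotation_orthogonal theta : orthogonal m (plane_rotation m u v theta).
Proof.
  intros i j Hi Hj. set (a := cos theta - 1). set (b := sin theta).
  rewrite (sumR_ext m _
    (fun k => (idmat m k i + (a * u i - b * v i) * u k + (a * v i + b * u i) * v k) *
              (idmat m k j + (a * u j - b * v j) * u k + (a * v j + b * u j) * v k)))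
    by (intros; unfold plane_rotation; fold a b; ring).
  rewrite sumR_quadratic, !sumR_idmat_l, !sumR_idmat_r by auto.
  unfold normsq in Hu, Hv. rewrite Hu, Hv, Huv.
  assert (Hab : a * a + b * b + 2 * a = 0).
  { unfold a, b. pose proof (sin2_cos2 theta). unfold Rsqr in H. nra. }
  assert (K : forall L R, L - R = (a * a + b * b + 2 * a) * (u i * u j + v i * v j) -> L = R)
    by (intros L R HLR; rewrite Hab in HLR; lra).
  unfold kdelta, idmat. case_nat_tests; try lia; apply K; ring.
Qed.

Lemma plane_rotation_0 : plane_rotation m u v 0 = idmat m.
Proof. extensionality i. extensionality j. unfold plane_rotation. rewrite cos_0, sin_0. ring. Qed.

Lemma plane_rotation_path_SO theta t : 0 <= t -> SO m (plane_rotation m u v (t * theta)).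
Proof.
  intros Ht. split; [apply plane_rotation_orthogonal|].
  apply (orthogonal_path_det m (fun s => plane_rotation m u v (s * theta))); auto.
  - intros; apply plane_rotation_orthogonal.
  - intros; unfold plane_rotation; reg.
  - rewrite Rmult_0_l, plane_rotation_0. apply MathCompDet.det_idmat.
Qed.

Lemma plane_rotation_u theta k : (k < m)%nat ->
  mvec m (plane_rotation m u v theta) u k = cos theta * u k + sin theta * v k.
Proof.
  intros Hk. unfold mvec.
  rewrite (sumR_ext _ _ (fun j => idmat m j k * u j + ((cos theta - 1) * u k) * (u j * u j)
     + ((cos theta - 1) * v k) * (u j * v j) + (sin theta * v k) * (u j * u j)
     - (sin theta * u k) * (u j * v j))).
  - rewrite sumR_sub, !sumR_add, !sumR_scal_l, sumR_idmat_l by auto.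
    unfold normsq in Hu. rewrite Hu, Huv. ring.
  - intros j Hj. unfold plane_rotation.
    replace (idmat m k j) with (idmat m j k) by (unfold idmat; case_nat_tests; subst; lia || lra).
    ring.
Qed.
End PlaneRotation.

Definition basis_vec (i : nat) : vec := fun k => if (k =? i)%nat then 1 else 0.

Lemma normsq_basis_vec m i : (i < m)%nat -> normsq m (basis_vec i) = 1.
Proof.
  intros Hi. unfold normsq, basis_vec.
  rewrite (sumR_ext _ _ (fun k => if (k =? i)%nat then 1 else 0)) by (intros; case_nat_tests; lra).
  rewrite sumR_kronecker. case_nat_tests; lia || lra.
Qed.

Lemma dot_basis_vec m r i : (i < m)%nat -> sumR m (fun k => r k * basis_vec i k) = r i.
Proof.
  intros Hi. unfold basis_vec.
  rewrite (sumR_ext _ _ (fun k => if (k =? i)%nat then r k else 0)) by (intros; case_nat_tests; lra).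
  rewrite sumR_kronecker. case_nat_tests; lia || lra.
Qed.

Lemma gram_schmidt m p q : normsq m p = 1 -> normsq m q = 1 ->
  let c := sumR m (fun k => p k * q k) in c * c < 1 ->
  let v := fun k => (q k - c * p k) / sqrt (1 - c * c) in
  normsq m v = 1 /\ sumR m (fun k => p k * v k) = 0 /\
  (forall k, q k = c * p k + sqrt (1 - c * c) * v k).
Proof.
  intros Hp Hq c Hc v. unfold normsq in *.
  assert (Hs : 0 < sqrt (1 - c * c)) by (apply sqrt_lt_R0; lra).
  assert (Hs2 : sqrt (1 - c * c) * sqrt (1 - c * c) = 1 - c * c) by (apply sqrt_sqrt; lra).
  split; [|split].
  - unfold v. rewrite (sumR_ext _ _ (fun k => / (1 - c * c) *
      (q k * q k - 2 * c * (p k * q k) + c * c * (p k * p k)))).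
    + rewrite sumR_scal_l, sumR_add, sumR_sub, !sumR_scal_l. fold c. rewrite Hp, Hq. field. lra.
    + intros. unfold Rdiv.
      replace (/ (1 - c * c)) with (/ sqrt (1 - c * c) * / sqrt (1 - c * c)) by (rewrite <- Rinv_mult, Hs2; auto).
      ring.
  - unfold v. rewrite (sumR_ext _ _ (fun k => / sqrt (1 - c * c) * (p k * q k - c * (p k * p k))))
      by (intros; unfold Rdiv; ring).
    rewrite sumR_scal_l, sumR_sub, sumR_scal_l. fold c. rewrite Hp. ring.
  - intros k. unfold v. field. lra.
Qed.

(* Equality in Cauchy-Schwarz: [|r' - c r|^2 = 1 - c^2 = 0]. *)
Lemma unit_parallel m r r' : normsq m r = 1 -> normsq m r' = 1 ->
  let c := sumR m (fun k => r k * r' k) in c * c = 1 ->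
  forall k, (k < m)%nat -> r' k = c * r k.
Proof.
  intros Hr Hr' c Hc k Hk. apply Rminus_diag_uniq.
  apply (sumR_sq_eq0 m (fun k => r' k - c * r k)); auto.
  unfold normsq in *.
  rewrite (sumR_ext _ _ (fun k => r' k * r' k - 2 * c * (r k * r' k) + c * c * (r k * r k)))
    by (intros; ring).
  rewrite sumR_add, sumR_sub, !sumR_scal_l. fold c. rewrite Hr, Hr'. nra.
Qed.

Lemma exists_orthogonal_unit m r : (2 <= m)%nat -> normsq m r = 1 ->
  exists v, normsq m v = 1 /\ sumR m (fun k => r k * v k) = 0.
Proof.
  intros Hm Hr.
  assert (Hi0 : exists i0, (i0 < m)%nat /\ r i0 * r i0 < 1).
  { assert (r O * r O + r 1%nat * r 1%nat <= normsq m r).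
    { unfold normsq. replace m with (2 + (m - 2))%nat by lia. rewrite sumR_split.
      pose proof (sumR_ge0 (m - 2) (fun k => r (2 + k)%nat * r (2 + k)%nat) (fun _ _ => Rle_0_sqr _)).
      cbn [sumR]. lra. }
    destruct (Rlt_dec (r O * r O) 1).
    - exists O. split; auto. lia.
    - exists 1%nat. split; [lia|]. pose proof (Rle_0_sqr (r O)). unfold Rsqr in *. lra. }
  destruct Hi0 as [i0 [Hi0 Hri0]].
  assert (Hc : sumR m (fun k => r k * basis_vec i0 k) * sumR m (fun k => r k * basis_vec i0 k) < 1)
    by (rewrite dot_basis_vec; auto).
  destruct (gram_schmidt m r (basis_vec i0) Hr (normsq_basis_vec m i0 Hi0) Hc) as [Hv [Hrv _]].
  eexists. split; [exact Hv|exact Hrv].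
Qed.

(* Rotate in the plane of [r] and the component of [r'] orthogonal to it (any orthogonal
   direction when [r' = +-r]) by the angle [acos (r.r')]. *)
Lemma rotation_path_between_units m r r' : (2 <= m)%nat -> normsq m r = 1 -> normsq m r' = 1 ->
  exists M : R -> mat,
    (forall t, 0 <= t <= 1 -> SO m (M t)) /\
    (forall i j, continuity (fun t => M t i j)) /\
    M 0 = idmat m /\ (forall k, (k < m)%nat -> mvec m (M 1) r k = r' k).
Proof.
  intros Hm Hr Hr'.
  set (c := sumR m (fun k => r k * r' k)).
  assert (Hc : -1 <= c <= 1) by (pose proof (dot_bound_normsq m r r'); fold c in H; lra).
  assert (Hv : exists v, normsq m v = 1 /\ sumR m (fun k => r k * v k) = 0 /\
                 forall k, (k < m)%nat -> r' k = c * r k + sqrt (1 - c * c) * v k).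
  { destruct (Rlt_dec (c * c) 1) as [Hlt|Hge].
    - destruct (gram_schmidt m r r' Hr Hr' Hlt) as [Hv [Hrv Hdec]].
      eexists. split; [exact Hv|]. split; [exact Hrv|]. intros k _. apply Hdec.
    - assert (Hc2 : c * c = 1) by nra.
      destruct (exists_orthogonal_unit m r Hm Hr) as [v [Hv Hrv]].
      exists v. split; auto. split; auto. intros k Hk.
      rewrite (unit_parallel m r r' Hr Hr' Hc2 k Hk). fold c.
      rewrite Hc2, Rminus_diag, sqrt_0. ring. }
  destruct Hv as [v [Hv [Hrv Hdec]]].
  exists (fun t => plane_rotation m r v (t * acos c)). split; [|split; [|split]].
  - intros t Ht. apply plane_rotation_path_SO; auto; lra.
  - intros; unfold plane_rotation; reg.
  - rewrite Rmult_0_l. apply plane_rotation_0.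
  - intros k Hk. rewrite Rmult_1_l, plane_rotation_u, cos_acos, sin_acos, Hdec by auto.
    unfold Rsqr. ring.
Qed.

Lemma polar_decomposition m r : (1 <= m)%nat ->
  exists d, normsq m d = 1 /\ forall k, (k < m)%nat -> r k = sqrt (normsq m r) * d k.
Proof.
  intros Hm. set (rho := sqrt (normsq m r)).
  assert (Hrho : rho * rho = normsq m r) by (apply sqrt_sqrt, normsq_ge0).
  destruct (Req_dec rho 0) as [Hz|Hnz].
  - exists (basis_vec O). split; [apply normsq_basis_vec; lia|].
    intros k Hk. rewrite Hz, Rmult_0_l. apply (sumR_sq_eq0 m r); auto.
    unfold normsq in Hrho. rewrite <- Hrho, Hz. ring.
  - exists (fun k => r k / rho). split.
    + unfold normsq. rewrite (sumR_ext _ _ (fun k => / (rho * rho) * (r k * r k))) by (intros; field; auto).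
      rewrite sumR_scal_l. fold (normsq m r). rewrite <- Hrho. field. auto.
    + intros; field; auto.
Qed.

(* If [r = rho d] with [|d| = 1] and [rho < 1], then
   [(1, 0, r) = p (1, 0, d) + (1 - p) (1, 0, -d)] for [p = (1 + rho) / 2]. *)
Lemma pure_normsq N m w : (1 <= m)%nat -> pure N m w ->
  exists r, normsq m r = 1 /\ w = stateOf N m r.
Proof.
  intros Hm [[r [Hr ->]] Hext]. exists r. split; auto.
  destruct (Req_dec (normsq m r) 1) as [|Hne]; auto. exfalso.
  destruct (polar_decomposition m r Hm) as [d [Hd Hrd]].
  set (rho := sqrt (normsq m r)) in Hrd.
  assert (Hrho : rho * rho = normsq m r) by (apply sqrt_sqrt, normsq_ge0).
  assert (Hrho01 : 0 <= rho < 1) by (pose proof (sqrt_pos (normsq m r)); fold rho in H; nra).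
  assert (Hmd : normsq m (fun k => - d k) = 1)
    by (unfold normsq in *; rewrite <- Hd; apply sumR_ext; intros; ring).
  destruct (Hext (stateOf N m d) (stateOf N m (fun k => - d k)) ((1 + rho) / 2)) as [E _].
  - lra.
  - exists d; split; auto; lra.
  - exists (fun k => - d k); split; auto; lra.
  - rewrite stateOf_convex. apply stateOf_ext. intros k Hk. rewrite Hrd by auto. field.
  - apply Hne. rewrite <- Hd. unfold normsq. apply sumR_ext. intros k Hk.
    rewrite (stateOf_inj N m d r E k Hk). auto.
Qed.

Lemma pure_states_rotation_path N m w w' : (2 <= m)%nat -> pure N m w -> pure N m w' ->
  exists M : R -> mat,
    (forall t, 0 <= t <= 1 -> SO m (M t)) /\
    (forall i j, continuity (fun t => M t i j)) /\
    M 0 = idmat m /\ mvec (Dim N m) (Tblock N m 0 (M 1)) w = w'.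
Proof.
  intros Hm Hw Hw'.
  destruct (pure_normsq N m w ltac:(lia) Hw) as [r [Hr ->]].
  destruct (pure_normsq N m w' ltac:(lia) Hw') as [r' [Hr' ->]].
  destruct (rotation_path_between_units m r r' Hm Hr Hr') as [M [H1 [H2 [H3 H4]]]].
  exists M. split; [|split; [|split]]; auto.
  rewrite mvec_Tblock_stateOf. apply stateOf_ext. auto.
Qed.

(** * The joint system *)

Lemma Tblock_mul_Phi N m a b Rm : mmul (Dim N m) (Tblock N m b Rm) (Phi N a) = Phi N (Nat.lxor b a).
Proof.
  extensionality i. extensionality j. unfold mmul.
  rewrite (sumR_ext _ _ (fun k => if (k =? j)%nat then
             (if (j <? 2 ^ N)%nat then Tblock N m b Rm i j * dsign N a j else 0) else 0))
    by (intros k Hk; unfold Phi; case_nat_tests; subst; lia || lra).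
  rewrite sumR_kronecker. unfold Phi, Tblock, Dim.
  case_nat_tests; subst; try lia; try lra. apply dsign_mul.
Qed.

Lemma Phi_mul_Tblock_tr N m a b Rm :
  mmul (Dim N m) (Phi N a) (trans (Tblock N m b Rm)) = Phi N (Nat.lxor a b).
Proof.
  extensionality i. extensionality j. unfold mmul, trans.
  rewrite (sumR_ext _ _ (fun k => if (k =? i)%nat then
             (if (i <? 2 ^ N)%nat then dsign N a i * Tblock N m b Rm j i else 0) else 0))
    by (intros k Hk; unfold Phi; case_nat_tests; subst; lia || lra).
  rewrite sumR_kronecker. unfold Phi, Tblock, Dim.
  case_nat_tests; subst; try lia; try lra. apply dsign_mul.
Qed.

Lemma dotm_Phi_r N m X mu : dotm (Dim N m) X (Phi N mu) = sumR (2 ^ N) (fun i => X i i * dsign N mu i).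
Proof.
  unfold dotm, Dim. rewrite sumR_split, (sumR_eq0 m), Rplus_0_r.
  - apply sumR_ext. intros i Hi.
    rewrite (sumR_ext _ _ (fun j => if (j =? i)%nat then X i i * dsign N mu i else 0))
      by (intros j Hj; unfold Phi; case_nat_tests; subst; lia || lra).
    rewrite sumR_kronecker. case_nat_tests; lia || lra.
  - intros. apply sumR_eq0. intros. unfold Phi. case_nat_tests; lia || lra.
Qed.

Lemma dotm_Phi_l N m X mu : dotm (Dim N m) (Phi N mu) X = sumR (2 ^ N) (fun i => dsign N mu i * X i i).
Proof.
  unfold dotm, Dim. rewrite sumR_split, (sumR_eq0 m), Rplus_0_r.
  - apply sumR_ext. intros i Hi.
    rewrite (sumR_ext _ _ (fun j => if (j =? i)%nat then dsign N mu i * X i i else 0))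
      by (intros j Hj; unfold Phi; case_nat_tests; subst; lia || lra).
    rewrite sumR_kronecker. case_nat_tests; lia || lra.
  - intros. apply sumR_eq0. intros. unfold Phi. case_nat_tests; lia || lra.
Qed.

Lemma Lambda_Phi N m phi : Lambda N m phi <-> exists mu, (mu < 2 ^ N)%nat /\ phi = Phi N mu.
Proof.
  split.
  - intros [T [T' [[mu [Rm [Hmu [_ ->]]]] [[mu' [Rm' [Hmu' [_ ->]]]] ->]]]].
    exists (Nat.lxor mu mu'). split; [apply lxor_lt_pow2; auto|].
    rewrite Tblock_mul_Phi, Nat.lxor_0_r, Phi_mul_Tblock_tr. auto.
  - intros [mu [Hmu ->]]. exists (Tblock N m mu (idmat m)), (Tblock N m 0 (idmat m)).
    split; [|split].
    + exists mu, (idmat m). repeat split; auto; apply SO_idmat.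
    + exists O, (idmat m). split; [apply pow2_pos|]. split; auto. apply SO_idmat.
    + rewrite Tblock_mul_Phi, !Nat.lxor_0_r, Phi_mul_Tblock_tr, Nat.lxor_0_r. auto.
Qed.

(* Local effects vanish on the coordinates [1 .. 2^N - 1], where the [Phi N mu] differ. *)
Lemma dotm_tens_Eloc_Phi N m e f mu : Eloc N m e -> Eloc N m f ->
  dotm (Dim N m) (tens e f) (Phi N mu) = e O * f O.
Proof.
  intros He Hf. rewrite dotm_Phi_r, sumR_head.
  - unfold tens. rewrite dsign_0r. ring.
  - apply pow2_pos.
  - intros i Hi. unfold tens. rewrite (Eloc_mid N m e i) by auto. ring.
Qed.

Lemma Phi_inj N mu mu' : (mu < 2 ^ N)%nat -> (mu' < 2 ^ N)%nat -> Phi N mu = Phi N mu' -> mu = mu'.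
Proof.
  intros Hmu Hmu' E.
  assert (Hd : forall i, (i < 2 ^ N)%nat -> dsign N mu i = dsign N mu' i).
  { intros i Hi. pose proof (f_equal (fun P => P i i) E) as Eii. simpl in Eii.
    unfold Phi in Eii. rewrite Nat.eqb_refl in Eii. destruct (Nat.ltb_spec i (2 ^ N)); [exact Eii|lia]. }
  pose proof (dsign_orthogonal N mu mu' Hmu Hmu') as Horth.
  rewrite (sumR_ext _ _ (fun _ => 1)), sumR_const in Horth
    by (intros; rewrite Hd by auto; apply dsign_sq).
  destruct (Nat.eqb_spec mu' mu); auto.
  pose proof (pow2_ge1 N). rewrite INR_pow2 in Horth. lra.
Qed.

Section LinearFunctionalOnOmegaAB.
Variables (N m : nat) (g : mat -> R).
Hypotheses (g_zero : g mzero = 0) (g_add : forall A B, g (madd A B) = g A + g B)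
  (g_scal : forall a A, g (mscal a A) = a * g A).

Lemma OmegaAB_linear_ge lo :
  (forall w w', Omega N m w -> Omega N m w' -> lo <= g (tens w w')) ->
  (forall mu, (mu < 2 ^ N)%nat -> lo <= g (Phi N mu)) ->
  forall phi, OmegaAB N m phi -> lo <= g phi.
Proof.
  intros Hprod HPhi.
  apply (conv_ge _ mzero madd mscal g g_zero g_add g_scal). intros A [HA|HA].
  - revert A HA. apply (conv_ge _ mzero madd mscal g g_zero g_add g_scal).
    intros A [w [w' [Hw [Hw' ->]]]]. auto.
  - apply Lambda_Phi in HA. destruct HA as [mu [Hmu ->]]. auto.
Qed.

Lemma OmegaAB_linear_le hi :
  (forall w w', Omega N m w -> Omega N m w' -> g (tens w w') <= hi) ->
  (forall mu, (mu < 2 ^ N)%nat -> g (Phi N mu) <= hi) ->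
  forall phi, OmegaAB N m phi -> g phi <= hi.
Proof.
  intros Hprod HPhi.
  apply (conv_le _ mzero madd mscal g _ _ g_zero g_add g_scal). intros A [HA|HA].
  - revert A HA. apply (conv_le _ mzero madd mscal g _ _ g_zero g_add g_scal).
    intros A [w [w' [Hw [Hw' ->]]]]. auto.
  - apply Lambda_Phi in HA. destruct HA as [mu [Hmu ->]]. auto.
Qed.
End LinearFunctionalOnOmegaAB.

Lemma OmegaAB_sub_OmegaMax N m phi : OmegaAB N m phi -> OmegaMax N m phi.
Proof.
  intros H. split.
  - assert (Hnorm : forall w w', Omega N m w -> Omega N m w' ->
                      dotm (Dim N m) (tens uvec uvec) (tens w w') = 1)
      by (intros; rewrite dotm_tens, !uvec_dotv_Omega by auto; lra).
    assert (HPhi : forall mu, dotm (Dim N m) (tens uvec uvec) (Phi N mu) = 1)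
      by (intros; rewrite dotm_tens_Eloc_Phi by apply Eloc_uvec; unfold uvec; simpl; lra).
    apply Rle_antisym; revert phi H.
    + apply OmegaAB_linear_le; auto using dotm_mzero, dotm_madd, dotm_mscal.
      * intros. rewrite Hnorm by auto. lra.
      * intros. rewrite HPhi. lra.
    + apply OmegaAB_linear_ge; auto using dotm_mzero, dotm_madd, dotm_mscal.
      * intros. rewrite Hnorm by auto. lra.
      * intros. rewrite HPhi. lra.
  - intros e f He Hf. revert phi H. apply OmegaAB_linear_ge;
      auto using dotm_mzero, dotm_madd, dotm_mscal.
    + intros. rewrite dotm_tens. apply Rmult_le_pos; apply Eloc_dotv_bounds; auto.
    + intros. rewrite dotm_tens_Eloc_Phi by auto. apply Rmult_le_pos; apply (Eloc_0_ge0 N m); auto.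
Qed.

Lemma inT_Omega N m T w : inT N m T -> Omega N m w -> Omega N m (mvec (Dim N m) T w).
Proof.
  intros [mu [Rm [_ [[HO _] ->]]]] [r [Hr ->]]. rewrite mvec_Tblock_stateOf.
  exists (mvec m Rm r). split; auto. rewrite normsq_mvec_orthogonal; auto.
Qed.

Lemma OmegaAB_linear_image N m (L : mat -> mat) :
  L mzero = mzero -> (forall A B, L (madd A B) = madd (L A) (L B)) ->
  (forall a A, L (mscal a A) = mscal a (L A)) ->
  (forall w w', Omega N m w -> Omega N m w' ->
     exists v v', Omega N m v /\ Omega N m v' /\ L (tens w w') = tens v v') ->
  (forall mu, (mu < 2 ^ N)%nat -> exists nu, (nu < 2 ^ N)%nat /\ L (Phi N mu) = Phi N nu) ->
  forall phi, OmegaAB N m phi -> OmegaAB N m (L phi).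
Proof.
  intros L_zero L_add L_scal Hprod HPhi.
  apply (conv_map mzero madd mscal mzero madd mscal L); auto. intros A [HA|HA].
  - left. revert A HA. apply (conv_map mzero madd mscal mzero madd mscal L); auto.
    intros A [w [w' [Hw [Hw' ->]]]]. auto.
  - right. apply Lambda_Phi in HA. destruct HA as [mu [Hmu ->]]. apply Lambda_Phi. auto.
Qed.

Lemma inT_OmegaAB_l N m T phi : inT N m T -> OmegaAB N m phi -> OmegaAB N m (mmul (Dim N m) T phi).
Proof.
  intros HT. apply OmegaAB_linear_image.
  - apply mmul_mzero.
  - intros; apply mmul_madd.
  - intros; apply mmul_mscal.
  - intros w w' Hw Hw'. exists (mvec (Dim N m) T w), w'.
    rewrite mmul_tens_l. repeat split; auto. apply inT_Omega; auto.
  - intros mu Hmu. destruct HT as [b [Rm [Hb [_ ->]]]].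
    exists (Nat.lxor b mu). split; [apply lxor_lt_pow2; auto|apply Tblock_mul_Phi].
Qed.

Lemma inT_OmegaAB_r N m T phi : inT N m T -> OmegaAB N m phi ->
  OmegaAB N m (mmul (Dim N m) phi (trans T)).
Proof.
  intros HT. apply OmegaAB_linear_image with (L := fun A => mmul (Dim N m) A (trans T)).
  - apply mmul_mzero_r.
  - intros; apply mmul_madd_r.
  - intros; apply mmul_mscal_r.
  - intros w w' Hw Hw'. exists w, (mvec (Dim N m) T w').
    rewrite mmul_tens_r. repeat split; auto. apply inT_Omega; auto.
  - intros mu Hmu. destruct HT as [b [Rm [Hb [_ ->]]]].
    exists (Nat.lxor mu b). split; [apply lxor_lt_pow2; auto|apply Phi_mul_Tblock_tr].
Qed.

(** * Dense coding and local capacity *)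

Lemma Feff_tens_Omega N m y w w' : Omega N m w -> Omega N m w' ->
  dotm (Dim N m) (Feff N y) (tens w w') = / 2 ^ N.
Proof.
  intros [r [_ ->]] [r' [_ ->]]. unfold Feff. rewrite dotm_mscal_l, dotm_Phi_l, sumR_head.
  - unfold tens. rewrite dsign_0r, !stateOf_0. ring.
  - apply pow2_pos.
  - intros i Hi. unfold tens. rewrite stateOf_mid by auto. ring.
Qed.

Lemma Feff_Phi N m y mu : (y < 2 ^ N)%nat -> (mu < 2 ^ N)%nat ->
  dotm (Dim N m) (Feff N y) (Phi N mu) = kdelta y mu.
Proof.
  intros Hy Hmu. unfold Feff. rewrite dotm_mscal_l, dotm_Phi_l.
  rewrite (sumR_ext _ _ (fun i => dsign N y i * dsign N mu i))
    by (intros i Hi; unfold Phi; rewrite Nat.eqb_refl; case_nat_tests; lia || auto).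
  rewrite dsign_orthogonal, INR_pow2 by auto. pose proof (pow2_ge1 N).
  unfold kdelta. destruct (y =? mu)%nat; field; lra.
Qed.

Lemma Feff_EAB N m y : (y < 2 ^ N)%nat -> EAB N m (Feff N y).
Proof.
  intros Hy phi H. pose proof (pow2_ge1 N).
  assert (Hinv : 0 < / 2 ^ N <= 1)
    by (split; [apply Rinv_0_lt_compat; lra|rewrite <- Rinv_1; apply Rinv_le_contravar; lra]).
  split; revert phi H.
  - apply OmegaAB_linear_ge; auto using dotm_mzero, dotm_madd, dotm_mscal.
    + intros. rewrite Feff_tens_Omega by auto. lra.
    + intros. rewrite Feff_Phi by auto. unfold kdelta. destruct (_ =? _)%nat; lra.
  - apply OmegaAB_linear_le; auto using dotm_mzero, dotm_madd, dotm_mscal.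
    + intros. rewrite Feff_tens_Omega by auto. lra.
    + intros. rewrite Feff_Phi by auto. unfold kdelta. destruct (_ =? _)%nat; lra.
Qed.

Lemma sum_Feff N : (fun i j => sumR (2 ^ N) (fun y => Feff N y i j)) = tens uvec uvec.
Proof.
  extensionality i. extensionality j. unfold Feff, mscal. rewrite sumR_scal_l. unfold Phi, tens, uvec.
  pose proof (pow2_ge1 N). pose proof (pow2_pos N).
  destruct (Nat.ltb_spec i (2 ^ N)); destruct (Nat.eqb_spec i j) as [<-|]; simpl;
    try (rewrite sumR_eq0 by (intros; lra); case_nat_tests; subst; lia || ring).
  rewrite sum_dsign_column, INR_pow2 by auto. destruct (i =? 0)%nat; field; lra.
Qed.

Lemma mutual_info_ext nx ny px pyx pyx' :
  (forall x y, (x < nx)%nat -> (y < ny)%nat -> pyx x y = pyx' x y) ->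
  mutual_info nx ny px pyx = mutual_info nx ny px pyx'.
Proof.
  intros H. unfold mutual_info. cbv zeta. apply sumR_ext. intros x Hx. apply sumR_ext. intros y Hy.
  rewrite (sumR_ext nx (fun x0 => px x0 * pyx x0 y) (fun x0 => px x0 * pyx' x0 y))
    by (intros; rewrite H; auto).
  rewrite H by auto. auto.
Qed.

Lemma mutual_info_identity_channel K : (1 <= K)%nat ->
  mutual_info K K (fun _ => / INR K) (fun x y => kdelta y x) = log2 (INR K).
Proof.
  intros HK. assert (HK' : 1 <= INR K) by (apply (le_INR 1); auto).
  assert (Hinv : 0 < / INR K) by (apply Rinv_0_lt_compat; lra).
  unfold mutual_info. cbv zeta.
  rewrite (sumR_ext K _ (fun x => / INR K * log2 (INR K))).
  { rewrite sumR_const. field. lra. }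
  intros x Hx. rewrite (sumR_ext K _ (fun y => if (y =? x)%nat then / INR K * log2 (INR K) else 0)).
  { rewrite sumR_kronecker. case_nat_tests; lia || auto. }
  intros y Hy.
  rewrite (sumR_ext K (fun x0 => / INR K * kdelta y x0) (fun x0 => if (y =? x0)%nat then / INR K else 0))
    by (intros; unfold kdelta; destruct (y =? _)%nat; ring).
  rewrite sumR_kronecker'. unfold kdelta.
  destruct (Nat.eqb_spec y x); destruct (Nat.ltb_spec y K); try lia.
  - destruct (Req_EM_T (/ INR K * 1) 0); [lra|]. f_equal; [lra|]. f_equal. field. lra.
  - destruct (Req_EM_T (/ INR K * 0) 0) as [|Hne]; auto. exfalso; apply Hne; ring.
Qed.

Lemma ln2_pos : 0 < ln 2.
Proof. pose proof ln_lt_2. lra. Qed.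

Lemma log2_pow2 N : log2 (2 ^ N) = INR N.
Proof. unfold log2. rewrite ln_pow by lra. field. pose proof ln2_pos. lra. Qed.

Lemma Tblock_encodes_Phi N m x y Rm : (x < 2 ^ N)%nat -> (y < 2 ^ N)%nat ->
  dotm (Dim N m) (Feff N y) (mmul (Dim N m) (Tblock N m x Rm) (Phi N 0)) =
    dotm (Dim N m) (Feff N y) (Phi N x) /\
  dotm (Dim N m) (Feff N y) (Phi N x) = kdelta y x.
Proof. intros Hx Hy. rewrite Tblock_mul_Phi, Nat.lxor_0_r. split; auto. apply Feff_Phi; auto. Qed.

Lemma dense_coding_mutual_info N m Rm :
  mutual_info (2 ^ N) (2 ^ N) (fun _ => / 2 ^ N)
    (fun x y => dotm (Dim N m) (Feff N y) (mmul (Dim N m) (Tblock N m x Rm) (Phi N 0)))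
  = INR N.
Proof.
  rewrite (mutual_info_ext _ _ _ _ (fun x y => kdelta y x)).
  - rewrite <- INR_pow2, mutual_info_identity_channel, INR_pow2 by (apply pow2_pos).
    apply log2_pow2.
  - intros x y Hx Hy. destruct (Tblock_encodes_Phi N m x y Rm Hx Hy) as [-> ->]. auto.
Qed.

Lemma ln_le_sub1 z : 0 < z -> ln z <= z - 1.
Proof. intros. pose proof (exp_ineq1_le (ln z)). rewrite exp_ln in H0 by auto. lra. Qed.

(* [log (P / Py) = log (P / a) + log (a / Py)] with [P / a <= K] and [ln t <= t - 1]. *)
Lemma mutual_info_term_le K px P a Py : 0 < K ->
  0 <= px -> 0 <= P -> P <= K * a -> px * P <= Py ->
  (if Req_EM_T (px * P) 0 then 0 else px * P * log2 (P / Py)) <=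
  px * P * (ln K + (a / Py - 1)) / ln 2.
Proof.
  intros HK Hpx HP HPa HPy. pose proof ln2_pos.
  destruct (Req_EM_T (px * P) 0) as [E|E]; [rewrite E; unfold Rdiv; lra|].
  assert (Hp : 0 < px * P) by (pose proof (Rmult_le_pos _ _ Hpx HP); lra).
  assert (HP0 : 0 < P) by (destruct HP; auto; subst; lra).
  assert (Ha : 0 < a) by nra.
  unfold log2. replace (P / Py) with ((P / a) * (a / Py)) by (field; lra).
  rewrite ln_mult by (apply Rdiv_lt_0_compat; lra).
  assert (ln (P / a) <= ln K).
  { assert (HPaK : P / a <= K)
      by (apply Rmult_le_reg_r with a; auto; unfold Rdiv; rewrite Rmult_assoc, Rinv_l; lra).
    destruct (Rle_lt_or_eq_dec _ _ HPaK) as [Hlt|Heq]; [|rewrite Heq; lra].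
    left. apply ln_increasing; auto. apply Rdiv_lt_0_compat; lra. }
  assert (ln (a / Py) <= a / Py - 1) by (apply ln_le_sub1; apply Rdiv_lt_0_compat; lra).
  replace (px * P * ((ln (P / a) + ln (a / Py)) / ln 2))
    with (px * P * (ln (P / a) + ln (a / Py)) / ln 2) by (field; lra).
  unfold Rdiv. apply Rmult_le_compat_r; [left; apply Rinv_0_lt_compat; lra|].
  apply Rmult_le_compat_l; unfold Rdiv in *; lra.
Qed.

Lemma mutual_info_le_log2 nx ny px pyx (a : nat -> R) K : 0 < K ->
  (forall x, (x < nx)%nat -> 0 <= px x) -> sumR nx px = 1 ->
  (forall x, (x < nx)%nat -> sumR ny (pyx x) = 1) ->
  (forall x y, (x < nx)%nat -> (y < ny)%nat -> 0 <= pyx x y <= K * a y) ->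
  (forall y, (y < ny)%nat -> 0 <= a y) -> sumR ny a = 1 ->
  mutual_info nx ny px pyx <= log2 K.
Proof.
  intros HK Hpx Hsum Hrow Hdom Ha0 Ha. pose proof ln2_pos.
  set (Py := fun y => sumR nx (fun x => px x * pyx x y)).
  assert (HPy : sumR ny Py = 1).
  { unfold Py. rewrite sumR_swap, <- Hsum. apply sumR_ext. intros x Hx.
    rewrite sumR_scal_l, Hrow by auto. ring. }
  assert (Hcol : forall y, (y < ny)%nat ->
            sumR nx (fun x => px x * pyx x y * (a y / Py y - 1)) <= a y - Py y).
  { intros y Hy. rewrite sumR_scal_r. fold (Py y).
    destruct (Req_dec (Py y) 0) as [E|E]; [rewrite E; pose proof (Ha0 y Hy); lra|].
    right. field. auto. }
  unfold mutual_info. cbv zeta. fold Py.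
  apply Rle_trans with
    (sumR nx (fun x => sumR ny (fun y => px x * pyx x y * (ln K + (a y / Py y - 1)) / ln 2))).
  - apply sumR_le. intros x Hx. apply sumR_le. intros y Hy.
    apply mutual_info_term_le; auto; try apply Hdom; auto.
    apply (sumR_term_le nx (fun x => px x * pyx x y)); auto.
    intros; apply Rmult_le_pos; auto; apply Hdom; auto.
  - rewrite sumR_swap.
    apply Rle_trans with (sumR ny (fun y => (ln K * Py y + (a y - Py y)) / ln 2)).
    + apply sumR_le. intros y Hy. unfold Rdiv. rewrite sumR_scal_r.
      apply Rmult_le_compat_r; [left; apply Rinv_0_lt_compat; lra|].
      rewrite (sumR_ext _ _ (fun x => ln K * (px x * pyx x y) + px x * pyx x y * (a y / Py y - 1)))
        by (intros; unfold Rdiv; ring).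
      rewrite sumR_add, sumR_scal_l. fold (Py y). pose proof (Hcol y Hy). lra.
    + unfold Rdiv. rewrite sumR_scal_r, sumR_add, sumR_sub, sumR_scal_l, Ha, HPy.
      unfold log2. right. field. lra.
Qed.

Lemma cap_achievable_le_1 N m I : cap_achievable N m I -> I <= 1.
Proof.
  intros [nx [ny [px [om [e [Hpx [Hsum [Hom [He [Hu ->]]]]]]]]]].
  replace 1 with (log2 2) by (unfold log2; field; pose proof ln2_pos; lra).
  apply mutual_info_le_log2 with (a := fun y => e y O); auto; try lra.
  - intros x Hx. unfold dotv. rewrite sumR_swap, <- (uvec_dotv_Omega N m (om x)) by auto.
    apply sumR_ext. intros i Hi. rewrite sumR_scal_r, (equal_f Hu i). auto.
  - intros x y Hx Hy. apply Eloc_dotv_bounds; auto.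
  - intros y Hy. apply (Eloc_0_ge0 N m); auto.
  - exact (equal_f Hu O).
Qed.

Lemma cap_achievable_1 N m : (1 <= m)%nat -> cap_achievable N m 1.
Proof.
  intros Hm. set (r := fun x : nat => vscal (if (x =? 0)%nat then 1 else -1) (basis_vec O)).
  assert (Hr : forall x, normsq m (r x) = 1).
  { intros x. rewrite <- (normsq_basis_vec m O) by lia. apply sumR_ext. intros.
    unfold r, vscal. destruct (x =? 0)%nat; ring. }
  exists 2%nat, 2%nat, (fun _ => / 2), (fun x => stateOf N m (r x)),
    (fun y => vscal (/2) (stateOf N m (r y))).
  split; [|split; [|split; [|split; [|split]]]].
  - intros; lra.
  - simpl. lra.
  - intros x _. exists (r x). split; auto. rewrite Hr; lra.
  - intros y _. apply convv_single. right; right. exists (r y). auto.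
  - extensionality i. simpl. unfold r, vscal, stateOf, uvec, basis_vec. case_nat_tests; lia || lra.
  - symmetry. rewrite (mutual_info_ext _ _ _ _ (fun x y => kdelta y x)).
    + replace 2 with (INR 2) by (simpl; lra). rewrite mutual_info_identity_channel by lia.
      replace (INR 2) with 2 by (simpl; lra). unfold log2. field. pose proof ln2_pos. lra.
    + intros x y Hx Hy. rewrite dotv_vscal_l, dotv_stateOf, stateOf_0.
      rewrite (sumR_ext _ _ (fun k => if (k =? 0)%nat then
          (if (y =? 0)%nat then 1 else -1) * (if (x =? 0)%nat then 1 else -1) else 0))
        by (intros k Hk; rewrite stateOf_hi by auto; unfold r, vscal, basis_vec; case_nat_tests; lra).
      rewrite sumR_kronecker. unfold kdelta.
      destruct x as [|[|x]]; destruct y as [|[|y]]; simpl; try lia; case_nat_tests; lia || lra.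
Qed.

Lemma capacity_is_1 N m : (1 <= m)%nat -> capacity_is N m 1.
Proof.
  intros Hm. split.
  - intros I HI. apply (cap_achievable_le_1 N m); auto.
  - intros b Hb. apply Hb, cap_achievable_1; auto.
Qed.

Theorem mainTheorem14 (N m : nat) (HN : (2 <= N)%nat) (Hm : (1 <= m)%nat) :
  (* (a) *)
  ((forall phi, Lambda N m phi <-> exists mu, (mu < 2 ^ N)%nat /\ phi = Phi N mu) /\
   (forall phi, OmegaMin N m phi -> OmegaAB N m phi) /\
   (forall phi, OmegaAB N m phi -> OmegaMax N m phi)) /\
  (* (b) *)
  ((forall T, inT N m T ->
      (forall w, Omega N m w -> Omega N m (mvec (Dim N m) T w)) /\
      (forall phi, OmegaAB N m phi -> OmegaAB N m (mmul (Dim N m) T phi)) /\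
      (forall phi, OmegaAB N m phi -> OmegaAB N m (mmul (Dim N m) phi (trans T)))) /\
   ((2 <= m)%nat ->
    forall w w', pure N m w -> pure N m w' ->
      exists Rt : R -> mat,
        (forall t, 0 <= t <= 1 -> SO m (Rt t)) /\
        (forall i j, continuity (fun t => Rt t i j)) /\
        Rt 0 = idmat m /\
        mvec (Dim N m) (Tblock N m 0 (Rt 1)) w = w')) /\
  (* (c) *)
  ((forall e f mu mu', Eloc N m e -> Eloc N m f -> (mu < 2 ^ N)%nat -> (mu' < 2 ^ N)%nat ->
      dotm (Dim N m) (tens e f) (Phi N mu) = dotm (Dim N m) (tens e f) (Phi N mu')) /\
   (forall mu mu', (mu < 2 ^ N)%nat -> (mu' < 2 ^ N)%nat -> mu <> mu' -> Phi N mu <> Phi N mu')) /\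
  (* (d) *)
  ((forall y, (y < 2 ^ N)%nat -> EAB N m (Feff N y)) /\
   (fun i j => sumR (2 ^ N) (fun y => Feff N y i j)) = tens uvec uvec /\
   (forall Rm x y, SO m Rm -> (x < 2 ^ N)%nat -> (y < 2 ^ N)%nat ->
      dotm (Dim N m) (Feff N y) (mmul (Dim N m) (Tblock N m x Rm) (Phi N 0)) =
        dotm (Dim N m) (Feff N y) (Phi N x) /\
      dotm (Dim N m) (Feff N y) (Phi N x) = kdelta y x) /\
   (forall Rm, SO m Rm ->
      mutual_info (2 ^ N) (2 ^ N) (fun _ => / 2 ^ N)
        (fun x y => dotm (Dim N m) (Feff N y) (mmul (Dim N m) (Tblock N m x Rm) (Phi N 0)))
      = INR N) /\
   capacity_is N m 1).
Proof.
  split; [|split; [|split]].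
  - split; [|split].
    + apply Lambda_Phi.
    + intros phi H. apply convm_single. left. exact H.
    + apply OmegaAB_sub_OmegaMax.
  - split.
    + intros T HT. split; [|split]; intros.
      * apply inT_Omega; auto.
      * apply inT_OmegaAB_l; auto.
      * apply inT_OmegaAB_r; auto.
    + intros Hm2 w w'. apply pure_states_rotation_path. exact Hm2.
  - split.
    + intros e f mu mu' He Hf _ _. rewrite !dotm_tens_Eloc_Phi by auto. reflexivity.
    + intros mu mu' Hmu Hmu' Hne E. apply Hne, (Phi_inj N); auto.
  - split; [|split; [|split; [|split]]].
    + intros. apply Feff_EAB. auto.
    + apply sum_Feff.
    + intros Rm x y _. apply Tblock_encodes_Phi.
    + intros Rm _. apply dense_coding_mutual_info.
    + apply capacity_is_1. exact Hm.
Qed.
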